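(* Fix $\alpha\in(0,1)$, a number of agents $M$, a measurable score $V:\mathcal X\times\mathcal Y\to\mathbb R$ and a test distribution $P_{\mathrm{test}}$ on $\mathcal X\times\mathcal Y$ such that the CDF $G(v)=P_{\mathrm{test}}(V(X,Y)\le v)$ is continuous. Consider a sequence of settings indexed by $t=1,2,\dots$: in setting $t$, agent $k$ has calibration sample size $n_{k,t}$ and calibration distribution $P^{\mathrm{cal}}_{k,t}$, the calibration samples are independent across agents and i.i.d. within each agent, and $\widehat q_t=\sum_k\frac{n_{k,t}}{N_t}\widehat q_{k,t}$ and $\widehat q_{\mathrm{mix},t}=\widehat F_{\mathrm{mix},t}^{-1}(1-\alpha)$ are the aggregated threshold and the empirical mixture quantile. Assume that as $t\to\infty$: $n_{k,t}\to\infty$ for every $k$; $\sup_k d_{\mathrm{TV}}(P^{\mathrm{cal}}_{k,t},P_{\mathrm{test}})\to0$; and $|\widehat q_t-\widehat q_{\mathrm{mix},t}|\to0$ in probability. Then \[ \Big|\mathbb P\big(Y\in C_{\widehat q_t}(X)\big)-(1-\alpha)\Big|\to0, \] where $(X,Y)\sim P_{\mathrm{test}}$ is independent of the calibration data.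
   Context: For $q\in\mathbb R$, $C_q(x)=\{y: V(x,y)\le q\}$. In setting $t$, agent $k$'s calibration scores are $V_{k,i}=V(x_{k,i},y_{k,i})$, $i=1,\dots,n_{k,t}$; $N_t=\sum_k n_{k,t}$; the local threshold $\widehat q_{k,t}$ is the $\lceil (n_{k,t}+1)(1-\alpha)\rceil$-th smallest score of agent $k$ (defined once $n_{k,t}$ is large enough that this index is at most $n_{k,t}$); $\widehat F_{k,t}(v)=\frac1{n_{k,t}}\sum_i\mathbf 1\{V_{k,i}\le v\}$, $\widehat F_{\mathrm{mix},t}=\sum_k\frac{n_{k,t}}{N_t}\widehat F_{k,t}$, and $F^{-1}(p)=\inf\{v: F(v)\ge p\}$. $d_{\mathrm{TV}}(P,Q)=\sup_A|P(A)-Q(A)|$. (The paper's regime has the Dirichlet concentration parameter of the calibration partition tending to infinity, which is what drives the total variation distances to zero.) *)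

From HB Require Import structures.
From mathcomp Require Import all_boot all_order all_algebra.
From mathcomp Require Import all_classical all_reals all_analysis.
Set Implicit Arguments. Unset Strict Implicit. Unset Printing Implicit Defensive.
Import Order.TTheory GRing.Theory Num.Theory.
Local Open Scope classical_set_scope.
Local Open Scope ring_scope.

Definition Cset {X Y : Type} {R : realType} (V : X * Y -> R) (q : R) (x : X)
  : set Y := [set y | V (x, y) <= q].

Definition dTV {d} {T : measurableType d} {R : realType}
  (P Q : probability T R) : \bar R :=
  ereal_sup [set `|(P A - Q A)%E|%E | A in [set A : set T | measurable A]].

Definition qidx {R : realType} (alpha : R) (n : nat) : nat :=
  `|Num.ceil ((n.+1)%:R * (1 - alpha))|%N.

Definition order_stat {R : realType} (s : seq R) (j : nat) : R :=
  nth 0 (sort <=%R s) j.-1.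

Definition qlocal {R : realType} (alpha : R) (s : seq R) : R :=
  order_stat s (qidx alpha (size s)).

Definition ecdf {R : realType} (s : seq R) (v : R) : R :=
  (count (fun x => x <= v) s)%:R / (size s)%:R.

Definition ginv {R : realType} (F : R -> R) (p : R) : R :=
  inf [set v | p <= F v].

Definition mutually_independent {d} {Omega : measurableType d} {R : realType}
  (P : probability Omega R) {I : eqType} {dT} {T : measurableType dT}
  (Z : I -> Omega -> T) (S : set I) : Prop :=
  forall (J : seq I), uniq J -> (forall j, j \in J -> S j) ->
  forall (B : I -> set T), (forall j, measurable (B j)) ->
  P (\bigcap_(j in [set j | j \in J]) (Z j @^-1` B j)) =
  (\prod_(j <- J) P (Z j @^-1` B j))%E.

Definition Ntot {R : realType} {M : nat} (s : 'I_M -> seq R) : R :=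
  \sum_(k < M) (size (s k))%:R.

Definition agg_threshold {R : realType} {M : nat} (alpha : R)
  (s : 'I_M -> seq R) : R :=
  \sum_(k < M) ((size (s k))%:R / Ntot s) * qlocal alpha (s k).

Definition mix_ecdf {R : realType} {M : nat} (s : 'I_M -> seq R) (v : R) : R :=
  \sum_(k < M) ((size (s k))%:R / Ntot s) * ecdf (s k) v.

Definition mix_quantile {R : realType} {M : nat} (alpha : R)
  (s : 'I_M -> seq R) : R :=
  ginv (mix_ecdf s) (1 - alpha).

(* The aggregated threshold is within o_P(1) of the empirical mixture quantile q_mix, and
   q_mix <= v iff F_mix(v) >= 1 - alpha.  At a fixed level v, F_mix(v) is the average of
   N_t pairwise independent indicators whose means are within sup_k d_TV of G(v), so by
   Chebyshev F_mix(v) -> G(v) in probability.  By continuity of G pick a < b with G(a)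
   slightly below and G(b) slightly above 1 - alpha and a margin e > 0; outside events of
   vanishing probability a - e < q_hat_t < b + e, so the coverage P(V(X,Y) <= q_hat_t) lies
   between G(a - e) and G(b + e) up to o(1). *)

From HB Require Import structures.
From mathcomp Require Import all_boot all_order all_algebra.
From mathcomp Require Import all_classical all_reals all_analysis.
From mathcomp Require Import ring lra.
Set Implicit Arguments. Unset Strict Implicit. Unset Printing Implicit Defensive.
Import Order.TTheory GRing.Theory Num.Theory.
Import numFieldNormedType.Exports.
Local Open Scope classical_set_scope.
Local Open Scope ring_scope.

Lemma sub_in_count (T : eqType) (a1 a2 : pred T) (s : seq T) :
  {in s, subpred a1 a2} -> (count a1 s <= count a2 s)%N.
Proof.
move=> a12; rewrite -(@eq_in_count _ (predI a1 (mem s))) => [|x xs]; last by rewrite /= xs andbT.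
by apply: sub_count => x /andP[a1x xs]; exact: a12.
Qed.

Section OrderStatistics.
Context {R : realType}.

Lemma sorted_nth_leE (s : seq R) m v : sorted <=%R s -> (m < size s)%N ->
  (nth 0 s m <= v) = (m < count (<= v) s)%N.
Proof.
elim: s m => [//|x s IH] m /= s_sorted m_lt.
have x_min : all (fun y => x <= y) s by exact: order_path_min le_trans s_sorted.
have [xv|vx] := leP x v.
  case: m m_lt => [|m] m_lt /=; first by rewrite xv.
  by rewrite IH ?(path_sorted s_sorted) // add1n ltnS.
have -> : count (<= v) s = 0%N.
  apply/eqP; rewrite -leqn0 leqNgt -has_count; apply/hasPn => y ys.
  by rewrite -ltNge (lt_le_trans vx) //; move/allP: x_min; apply.
rewrite /= ltn0; apply/negbTE; rewrite -ltNge.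
case: m m_lt => [|m] m_lt //=.
by apply: lt_le_trans vx _; move/allP: x_min; apply; rewrite mem_nth.
Qed.

Lemma order_stat_leE (s : seq R) j v : (j.-1 < size s)%N ->
  (order_stat s j <= v) = (j.-1 < count (<= v) s)%N.
Proof.
move=> j_lt; rewrite /order_stat sorted_nth_leE ?size_sort ?count_sort //.
exact: (sort_sorted (@le_total _ R)).
Qed.

Lemma order_stat_default (s : seq R) j : (size s <= j.-1)%N -> order_stat s j = 0.
Proof. by move=> j_ge; rewrite /order_stat nth_default // size_sort. Qed.

Lemma seq_bounded (s : seq R) : exists B, forall x, x \in s -> `|x| <= B.
Proof.
elim: s => [|y s [B sB]]; first by exists 0.
exists (Num.max `|y| B) => x; rewrite inE => /orP[/eqP->|xs].
  by rewrite le_max lexx.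
by rewrite le_max sB ?orbT.
Qed.

Lemma seq_gap_right (s : seq R) v :
  exists2 v', v < v' & forall x, x \in s -> v < x -> v' <= x.
Proof.
elim: s => [|y s [v' vv' sv']]; first by exists (v + 1); rewrite ?ltrDl.
have [vy|yv] := ltP v y.
  exists (Num.min v' y); first by rewrite lt_min vv' vy.
  move=> x; rewrite inE => /orP[/eqP->|xs] vx; first by rewrite ge_min lexx orbT.
  by rewrite ge_min sv'.
exists v' => // x; rewrite inE => /orP[/eqP->|xs] vx; last exact: sv'.
by have := le_lt_trans yv vx; rewrite ltxx.
Qed.

End OrderStatistics.

Section EmpiricalMixture.
Context {R : realType} {M : nat} (s : 'I_M -> seq R).
Hypothesis M_gt0 : (0 < M)%N.
Hypothesis size_gt0 : forall k, (0 < size (s k))%N.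

Lemma Ntot_gt0 : 0 < Ntot s.
Proof.
by rewrite /Ntot (bigD1 (Ordinal M_gt0)) //= ltr_pwDl ?sumr_ge0 // ltr0n.
Qed.

Lemma mix_ecdfE v :
  mix_ecdf s v = (\sum_(k < M) (count (<= v) (s k))%:R) / Ntot s.
Proof.
rewrite /mix_ecdf mulr_suml; apply: eq_bigr => k _; rewrite /ecdf.
have size_neq0 : (size (s k))%:R != 0 :> R by rewrite pnatr_eq0 -lt0n.
by rewrite mulrC mulrA mulfVK.
Qed.

Let pooled := flatten [seq s k | k <- enum 'I_M].

Let mem_pooled k x : x \in s k -> x \in pooled.
Proof. by move=> xs; apply/flatten_mapP; exists k; rewrite ?mem_enum. Qed.

Lemma mix_ecdf_le u v : (forall x, x \in pooled -> x <= u -> x <= v) ->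
  mix_ecdf s u <= mix_ecdf s v.
Proof.
move=> uv; rewrite !mix_ecdfE ler_pM2r ?invr_gt0 ?Ntot_gt0 //.
apply: ler_sum => k _; rewrite ler_nat; apply: sub_in_count => x xs.
exact: uv (mem_pooled xs).
Qed.

Lemma mix_ecdf_ub v : (forall x, x \in pooled -> x <= v) -> mix_ecdf s v = 1.
Proof.
move=> sv; rewrite mix_ecdfE [X in X / _](_ : _ = Ntot s) ?divff ?gt_eqF ?Ntot_gt0 //.
apply: eq_bigr => k _; rewrite -count_predT.
rewrite (eq_in_count (a2 := predT)) // => x xs /=.
by rewrite sv // (mem_pooled xs).
Qed.

Lemma mix_ecdf_lb v : (forall x, x \in pooled -> v < x) -> mix_ecdf s v = 0.
Proof.
move=> vs; rewrite mix_ecdfE big1 ?mul0r // => k _.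
rewrite (@eq_in_count _ _ pred0) ?count_pred0 // => x xs.
by rewrite /= leNgt vs // (mem_pooled xs).
Qed.

Lemma mix_quantile_leE p v : 0 < p <= 1 ->
  (ginv (mix_ecdf s) p <= v) = (p <= mix_ecdf s v).
Proof.
case/andP=> p_gt0 p_le1; set S := [set u | p <= mix_ecdf s u].
have [B sB] := seq_bounded pooled.
have S_lb : lbound S (- B - 1).
  move=> u Su; rewrite leNgt; apply/negP => uB; move: Su; rewrite /S /=.
  rewrite mix_ecdf_lb ?leNgt ?p_gt0 // => x /sB; rewrite ler_norml => /andP[Bx _].
  by rewrite (lt_le_trans uB) //; lra.
have S_ne : S !=set0.
  by exists B; rewrite /S /= mix_ecdf_ub // => x /sB /(le_trans (ler_norm _)).
apply/idP/idP => [|Sv]; last by apply: ge_inf => //; exists (- B - 1).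
apply: contraTT; rewrite -!ltNge => Fv.
(* the mixture ECDF is a step function, constant on [v, v') up to the next pooled score v' *)
have [v' vv' gap] := seq_gap_right pooled v.
apply: lt_le_trans vv' _; apply: lb_le_inf => // u Su.
rewrite leNgt; apply: contraTN Su => uv'; rewrite /S /= -ltNge.
apply: le_lt_trans Fv; apply: mix_ecdf_le => x xs xu.
by rewrite leNgt; apply: contraTN xu => vx; rewrite -ltNge (lt_le_trans uv') ?gap.
Qed.

End EmpiricalMixture.

Section Measurability.
Context {R : realType} d (T : measurableType d).

Lemma measurable_set_le (f g : T -> R) : measurable_fun setT f ->
  measurable_fun setT g -> measurable [set w | f w <= g w].
Proof.
move=> mf mg; have mT : measurable [set true] by [].
have := measurable_realfun.measurable_fun_ler mf mg measurableT mT.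
by rewrite setTI; congr measurable; apply/seteqP; split => w //= ->.
Qed.

Lemma measurable_dist_ge (f g : T -> R) c : measurable_fun setT f ->
  measurable_fun setT g -> measurable [set w | c <= `|f w - g w|].
Proof.
move=> mf mg; apply: measurable_set_le; first exact: measurable_cst.
apply: measurableT_comp (@measurable_realfun.normr_measurable R setT) _.
exact: measurable_realfun.measurable_funB.
Qed.

Lemma measurable_fun_sublevel (f : T -> R) :
  (forall v, measurable [set w | f w <= v]) -> measurable_fun setT f.
Proof.
move=> mf; apply: (measurability _ (measurable_realfun.RGenOInfty.measurableE R)) => //.
move=> _ [_ [v ->] <-]; rewrite setTI.
have -> : f @^-1` `]v, +oo[ = ~` [set w | f w <= v].
  by apply/seteqP; split => w /=; rewrite in_itv /= andbT ltNge => /negP.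
exact: measurableC.
Qed.

Lemma measurable_count_le (f : nat -> T -> R) (l : seq nat) v :
  (forall i, measurable_fun setT (f i)) ->
  measurable_fun setT (fun w => (count (<= v) [seq f i w | i <- l])%:R : R).
Proof.
move=> mf; pose below i := [set w | f i w <= v].
apply: (@eq_measurable_fun _ _ _ _ setT (fun w => \sum_(i <- l) (\1_(below i) w : R))).
  move=> w _; rewrite count_map -sum1_count natr_sum [RHS]big_mkcond.
  apply: eq_bigr => i _; rewrite indicE /=; case: (boolP (f i w <= v)) => fv.
    by rewrite mem_set.
  by rewrite memNset //; apply/negP.
apply: measurable_sum => i; apply: measurable_realfun.measurable_indic.
by apply: measurable_set_le => //; exact: measurable_cst.
Qed.

Lemma measurable_order_stat (f : nat -> T -> R) (l : seq nat) j :
  (forall i, measurable_fun setT (f i)) ->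
  measurable_fun setT (fun w => order_stat [seq f i w | i <- l] j).
Proof.
move=> mf; have [j_lt|j_ge] := ltnP j.-1 (size l); last first.
  apply: (@eq_measurable_fun _ _ _ _ setT (cst (0 : R))); last exact: measurable_cst.
  by move=> w _; rewrite order_stat_default ?size_map.
apply: measurable_fun_sublevel => v.
have -> : [set w | order_stat [seq f i w | i <- l] j <= v] =
    [set w | j.-1.+1%:R <= (count (<= v) [seq f i w | i <- l])%:R :> R].
  by apply/seteqP; split => w /=; rewrite order_stat_leE ?size_map // ler_nat.
by apply: measurable_set_le; [exact: measurable_cst | exact: measurable_count_le].
Qed.

End Measurability.

Section PairwiseIndependentIndicators.
Context {R : realType} d (T : measurableType d) (P : probability T R).

Definition bounded_measurable (f : T -> R) :=
  measurable_fun setT f /\ exists C, forall w, `|f w| <= C.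

Lemma bounded_measurable_integrable f :
  bounded_measurable f -> P.-integrable setT (EFin \o f).
Proof.
move=> [mf [C fC]]; apply: measurable_bounded_integrable => //.
  by rewrite (le_lt_trans (probability_le1 P measurableT)) ?ltry.
exists C; split; first exact: num_real.
by move=> c Cc w _ /=; exact: le_trans (fC w) (ltW Cc).
Qed.

Lemma bounded_measurable_cst c : bounded_measurable (cst c).
Proof. by split; [exact: measurable_cst | exists `|c|]. Qed.

Lemma bounded_measurable_indic A : measurable A -> bounded_measurable (\1_A).
Proof.
move=> mA; split; first exact: measurable_realfun.measurable_indic.
by exists 1 => w; rewrite indicE; case: (w \in A); rewrite ?normr1 ?normr0.
Qed.

Lemma bounded_measurableD f g : bounded_measurable f -> bounded_measurable g ->
  bounded_measurable (f \+ g).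
Proof.
move=> [mf [C fC]] [mg [D gD]]; split; first exact: measurable_realfun.measurable_funD.
by exists (C + D) => w; exact: le_trans (ler_normD _ _) (lerD (fC w) (gD w)).
Qed.

Lemma bounded_measurableM f g : bounded_measurable f -> bounded_measurable g ->
  bounded_measurable (f \* g).
Proof.
move=> [mf [C fC]] [mg [D gD]]; split; first exact: measurable_realfun.measurable_funM.
by exists (C * D) => w; rewrite normrM ler_pM.
Qed.

Lemma bounded_measurable_sum (I : Type) (J : seq I) (f : I -> T -> R) :
  (forall i, bounded_measurable (f i)) ->
  bounded_measurable (fun w => \sum_(i <- J) f i w).
Proof.
move=> bf; elim: J => [|i J IH].
  by under eq_fun do rewrite big_nil; exact: bounded_measurable_cst.
by under eq_fun do rewrite big_cons; exact: bounded_measurableD.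
Qed.

Local Notation "''E' f" := (Rintegral P setT f) (at level 10, f at level 8).

Lemma RintegralD_bounded f g : bounded_measurable f -> bounded_measurable g ->
  'E (f \+ g) = 'E f + 'E g.
Proof. by move=> bf bg; rewrite RintegralD //; exact: bounded_measurable_integrable. Qed.

Lemma RintegralZl_bounded c f : bounded_measurable f ->
  'E (fun w => c * f w) = c * 'E f.
Proof. by move=> bf; rewrite RintegralZl //; exact: bounded_measurable_integrable. Qed.

Lemma Rintegral_cst_prob c : 'E (fun=> c) = c.
Proof. by rewrite Rintegral_cst //; move: (probability_setT P) => /= ->; rewrite mulr1. Qed.

Lemma Rintegral_indic_prob A : measurable A -> 'E (\1_A) = fine (P A).
Proof. by move=> mA; rewrite /Rintegral integral_indic // setIT. Qed.

Lemma Rintegral_sum_bounded (I : Type) (J : seq I) (f : I -> T -> R) :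
  (forall i, bounded_measurable (f i)) ->
  'E (fun w => \sum_(i <- J) f i w) = \sum_(i <- J) 'E (f i).
Proof.
move=> bf; elim: J => [|i J IH].
  by under eq_fun do rewrite big_nil; rewrite big_nil Rintegral_cst_prob.
under eq_fun do rewrite big_cons.
by rewrite big_cons -IH -RintegralD_bounded //; exact: bounded_measurable_sum.
Qed.

Lemma markov_sq f eps : bounded_measurable f -> 0 < eps ->
  eps ^+ 2 * fine (P [set w | eps <= `|f w|]) <= 'E (fun w => f w ^+ 2).
Proof.
move=> bf eps_gt0; set A := [set w | eps <= `|f w|].
have mA : measurable A.
  apply: measurable_set_le; first exact: measurable_cst.
  exact: measurableT_comp (@measurable_realfun.normr_measurable R setT) bf.1.
rewrite -Rintegral_indic_prob // -RintegralZl_bounded; last exact: bounded_measurable_indic.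
apply: le_Rintegral => //.
- apply: bounded_measurable_integrable.
  exact: bounded_measurableM (bounded_measurable_cst _) (bounded_measurable_indic mA).
- apply: bounded_measurable_integrable.
  rewrite (_ : (fun w => _) = f \* f); first exact: bounded_measurableM.
  by apply/funext => w; rewrite expr2.
move=> w _; rewrite indicE; case: (boolP (w \in A)) => [/set_mem Aw|_].
  by rewrite mulr1 -[f w ^+ 2]real_normK ?num_real // !expr2 ler_pM // ltW.
by rewrite mulr0 sqr_ge0.
Qed.

Lemma Rintegral_centered_indicM A B : measurable A -> measurable B ->
  'E (fun w => (\1_A w - fine (P A)) * (\1_B w - fine (P B))) =
  fine (P (A `&` B)) - fine (P A) * fine (P B).
Proof.
move=> mA mB; set a := fine (P A); set b := fine (P B).
have -> : (fun w => (\1_A w - a) * (\1_B w - b)) =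
    ((\1_(A `&` B) : T -> R) \+ (fun w => - b * (\1_A : T -> R) w)) \+
    ((fun w => - a * (\1_B : T -> R) w) \+ cst (a * b)).
  by apply/funext => w; rewrite /= indicI /=; ring.
have bA := bounded_measurable_indic mA; have bB := bounded_measurable_indic mB.
have mAB := measurableI _ _ mA mB; have bAB := bounded_measurable_indic mAB.
have bc := bounded_measurable_cst.
have bbA : bounded_measurable (fun w => - b * (\1_A : T -> R) w).
  exact: bounded_measurableM (bc _) bA.
have baB : bounded_measurable (fun w => - a * (\1_B : T -> R) w).
  exact: bounded_measurableM (bc _) bB.
rewrite !RintegralD_bounded ?RintegralZl_bounded //; try exact: bounded_measurableD; try exact: bc.
by rewrite Rintegral_cst_prob !Rintegral_indic_prob // -/a -/b; ring.
Qed.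

Lemma chebyshev_indic_sum (I : eqType) (J : seq I) (E : I -> set T) eps :
  0 < eps -> uniq J -> (forall i, measurable (E i)) ->
  {in J &, forall i j, i != j -> P (E i `&` E j) = (P (E i) * P (E j))%E} ->
  fine (P [set w | eps <= `|\sum_(i <- J) \1_(E i) w - \sum_(i <- J) fine (P (E i))|])
    <= (size J)%:R / eps ^+ 2.
Proof.
move=> eps_gt0 J_uniq mE indep.
pose g i w := (\1_(E i) w : R) - fine (P (E i)).
have bg i : bounded_measurable (g i).
  exact: bounded_measurableD (bounded_measurable_indic (mE i)) (bounded_measurable_cst _).
have bgg i j : bounded_measurable (g i \* g j) by exact: bounded_measurableM.
have -> : [set w | eps <= `|\sum_(i <- J) \1_(E i) w - \sum_(i <- J) fine (P (E i))|] =
    [set w | eps <= `|\sum_(i <- J) g i w|] by apply/seteqP; split => w; rewrite /= sumrB.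
rewrite ler_pdivlMr ?exprn_gt0 // mulrC.
apply: le_trans (markov_sq (bounded_measurable_sum J bg) eps_gt0) _.
have sqE w : (\sum_(i <- J) g i w) ^+ 2 = \sum_(i <- J) \sum_(j <- J) (g i \* g j) w.
  by rewrite expr2 mulr_suml; apply: eq_bigr => i _; rewrite mulr_sumr.
under eq_fun do rewrite sqE.
rewrite Rintegral_sum_bounded => [|i]; last exact: bounded_measurable_sum.
rewrite -sum1_size natr_sum !big_seq.
(* only the diagonal survives: off-diagonal covariances vanish by independence *)
apply: ler_sum => i iJ; rewrite Rintegral_sum_bounded // (bigD1_seq i) //= big1_seq.
  rewrite Rintegral_centered_indicM // setIid addr0.
  have : 0 <= fine (P (E i)) <= 1.
    by rewrite fine_ge0 ?measure_ge0 //= -lee_fin fineK ?fin_num_measure ?probability_le1.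
  nra.
move=> j /andP[ji jJ]; rewrite Rintegral_centered_indicM // indep 1?eq_sym //.
by rewrite fineM ?fin_num_measure // subrr.
Qed.

End PairwiseIndependentIndicators.

Section MeasureBounds.
Context {R : realType} d (T : measurableType d).

Lemma le_fine_measure (P : probability T R) (A B : set T) :
  measurable A -> measurable B -> A `<=` B -> fine (P A) <= fine (P B).
Proof.
move=> mA mB AB; rewrite -lee_fin !fineK ?fin_num_measure //.
by apply: le_measure; rewrite ?inE.
Qed.

Lemma le_fine_measureU3 (P : probability T R) (A B C D : set T) :
  measurable A -> measurable B -> measurable C -> measurable D ->
  A `<=` B `|` C `|` D -> fine (P A) <= fine (P B) + fine (P C) + fine (P D).
Proof.
move=> mA mB mC mD ABCD; rewrite -lee_fin !EFinD !fineK ?fin_num_measure //.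
have mBC : measurable (B `|` C) by exact: measurableU.
apply: le_trans (le_measure P _ _ ABCD) _; rewrite ?inE //; first exact: measurableU.
by apply: le_trans (measureU2 P mBC mD) _; rewrite leeD2r // measureU2.
Qed.

Lemma dTV_abs_lt (P Q : probability T R) A e : (dTV P Q < e%:E)%E ->
  measurable A -> `|fine (P A) - fine (Q A)| < e.
Proof.
move=> PQe mA; rewrite -lte_fin -abse_EFin EFinB !fineK ?fin_num_measure //.
by apply: le_lt_trans PQe; apply: ereal_sup_ubound; exists A.
Qed.

Lemma mutually_independent_pair {dU} {U : measurableType dU} (P : probability T R)
    (I : eqType) (Z : I -> T -> U) (S : set I) i j (B C : set U) :
  mutually_independent P Z S -> S i -> S j -> i != j ->
  measurable B -> measurable C ->
  P (Z i @^-1` B `&` Z j @^-1` C) = (P (Z i @^-1` B) * P (Z j @^-1` C))%E.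
Proof.
move=> indep Si Sj ij mB mC; pose BC k := if k == j then C else B.
have ij_uniq : uniq [:: i; j] by rewrite /= inE ij.
have /= := indep [:: i; j] ij_uniq _ BC _.
rewrite !big_cons big_nil mule1 /BC eqxx (negbTE ij) => <-.
- congr (P _); apply/seteqP; split => [w [Bw Cw] k /=|w ijw].
    by rewrite !inE => /orP[]/eqP->; rewrite ?eqxx ?(negbTE ij).
  split; first by have := ijw i; rewrite /= mem_head (negbTE ij); apply.
  by have := ijw j; rewrite /= !inE eqxx orbT; apply.
- by move=> k; rewrite !inE => /orP[]/eqP->.
- by move=> k; rewrite /BC; case: ifP.
Qed.

End MeasureBounds.

Lemma continuous_ball_le {R : realType} (f : R -> R) x eta : {for x, continuous f} ->
  0 < eta -> exists2 e, 0 < e & forall y, `|x - y| <= e -> `|f x - f y| < eta.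
Proof.
move=> /cvgrPdist_lt /[apply] /nbhs_ballP[del del_gt0 xdel].
exists (del / 2) => [|y xy]; first by rewrite divr_gt0.
by apply: xdel; rewrite /ball /= (le_lt_trans xy) // ltr_pdivrMr // ltr_pMr // ltr1n.
Qed.

Section ContinuousCdf.
Context {R : realType} d (T : measurableType d) (P : probability T R) (V : T -> R).
Hypothesis mV : measurable_fun setT V.

Let G v := fine (P (V @^-1` `]-oo, v])).

Let XV : {RV P >-> R} := mfun_Sub (mem_set mV : V \in mfun).

Lemma cdf_lt_ex c : 0 < c -> exists v, G v < c.
Proof.
move=> c_gt0; have /fine_cvgP[_] := cvg_cdfNy0 XV.
move/cvgrPdist_lt => /(_ c c_gt0) /filter_ex[v].
by rewrite sub0r normrN => /(le_lt_trans (ler_norm _)) Gv; exists v.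
Qed.

Lemma cdf_gt_ex c : c < 1 -> exists v, c < G v.
Proof.
move=> c_lt1; have /fine_cvgP[_] := cvg_cdfy1 XV.
move/cvgrPdist_lt => /(_ (1 - c)); rewrite subr_gt0 => /(_ c_lt1) /filter_ex[v].
by move=> /(le_lt_trans (ler_norm _)) Gv; exists v; rewrite /G; move: Gv => /=; lra.
Qed.

Hypothesis cG : continuous G.

Lemma continuous_cdf_attains c : 0 < c < 1 -> exists a, G a = c.
Proof.
case/andP=> c_gt0 c_lt1; have [u Gu] := cdf_lt_ex c_gt0; have [w Gw] := cdf_gt_ex c_lt1.
have cGI x y : {within `[x, y], continuous G} by exact: continuous_subspaceT.
have Gc : Num.min (G u) (G w) <= c <= Num.max (G u) (G w).
  by rewrite ge_min le_max (ltW Gu) (ltW Gw) orbT.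
have [uw|/ltW wu] := leP u w.
  by have [a _ Ga] := IVT uw (cGI u w) Gc; exists a.
by rewrite minC maxC in Gc; have [a _ Ga] := IVT wu (cGI w u) Gc; exists a.
Qed.

Lemma continuous_cdf_bracket c eta : 0 < c < 1 -> 0 < eta ->
  exists a b e, [/\ 0 < e, G a < c, c < G b, c - eta < G (a - e) & G (b + e) < c + eta].
Proof.
case/andP=> c_gt0 c_lt1 eta_gt0.
pose cl := Num.max (c - eta / 2) (c / 2); pose cu := Num.min (c + eta / 2) ((1 + c) / 2).
have [cl_gt cl_lt] : c - eta < cl /\ cl < c.
  by rewrite /cl lt_max gt_max; split; [apply/orP; left|apply/andP; split]; lra.
have [cu_gt cu_lt] : c < cu /\ cu < c + eta.
  by rewrite /cu lt_min gt_min; split; [apply/andP; split|apply/orP; left]; lra.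
have [a Ga] : exists a, G a = cl.
  have cl_gt0 : 0 < cl by rewrite /cl lt_max divr_gt0 ?orbT.
  by apply: continuous_cdf_attains; rewrite cl_gt0 /=; lra.
have [b Gb] : exists b, G b = cu.
  apply: continuous_cdf_attains; rewrite (lt_trans c_gt0 cu_gt) /= /cu gt_min.
  by apply/orP; right; lra.
have [ea ea_gt0 Gea] : exists2 e, 0 < e & forall y, `|a - y| <= e -> `|G a - G y| < cl - (c - eta).
  by apply: continuous_ball_le; [exact: cG | lra].
have [eb eb_gt0 Geb] : exists2 e, 0 < e & forall y, `|b - y| <= e -> `|G b - G y| < c + eta - cu.
  by apply: continuous_ball_le; [exact: cG | lra].
set e := Num.min ea eb.
have e_ge0 : 0 <= e by rewrite le_min (ltW ea_gt0) (ltW eb_gt0).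
have [e_le_a e_le_b] : e <= ea /\ e <= eb by rewrite !ge_min !lexx ?orbT.
exists a, b, e; split; rewrite ?lt_min ?ea_gt0 ?Ga ?Gb //.
- have /ltr_normlP[] : `|G a - G (a - e)| < cl - (c - eta).
    by apply: Gea; rewrite opprB addrC subrK ger0_norm.
  by rewrite Ga; lra.
- have /ltr_normlP[] : `|G b - G (b + e)| < c + eta - cu.
    by apply: Geb; rewrite opprD addNKr normrN ger0_norm.
  by rewrite Gb; lra.
Qed.

End ContinuousCdf.

Unset Implicit Arguments.

Section CoverageConsistency.
Context {R : realType} {alpha : R} {M : nat}
  {dX dY : measure_display} {X : measurableType dX} {Y : measurableType dY}
  {V : X * Y -> R} {Ptest : probability (X * Y)%type R}
  {dO : measure_display} {Omega : nat -> measurableType dO}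
  {P : forall t, probability (Omega t) R}
  {n : 'I_M -> nat -> nat}
  {Pcal : 'I_M -> nat -> probability (X * Y)%type R}
  {Z : forall t, 'I_M -> nat -> Omega t -> (X * Y)%type}
  {Ztest : forall t, Omega t -> (X * Y)%type}.
Hypothesis alpha01 : 0 < alpha < 1.
Hypothesis M_gt0 : (0 < M)%N.
Hypothesis mV : measurable_fun setT V.
Hypothesis G_continuous : continuous (fun v : R => fine (Ptest (V @^-1` `]-oo, v]))).
Hypothesis mZ : forall t k i, measurable_fun setT (Z t k i).
Hypothesis mZtest : forall t, measurable_fun setT (Ztest t).
Hypothesis lawZ : forall t k i, (i < n k t)%N -> forall A, measurable A ->
  P t (Z t k i @^-1` A) = Pcal k t A.
Hypothesis lawZtest : forall t A, measurable A -> P t (Ztest t @^-1` A) = Ptest A.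
Hypothesis indep : forall t, mutually_independent (P t)
  (fun j : option ('I_M * nat) =>
     match j with Some ki => Z t ki.1 ki.2 | None => Ztest t end)
  [set j | match j with Some ki => (ki.2 < n ki.1 t)%N | None => True end].
Hypothesis n_cvg : forall k (B : nat), \forall t \near \oo, (B <= n k t)%N.
Hypothesis dTV_cvg : forall e : R, 0 < e -> \forall t \near \oo,
  forall k, (dTV (Pcal k t) Ptest < e%:E)%E.

Let G v := fine (Ptest (V @^-1` `]-oo, v])).
Let scores t (w : Omega t) (k : 'I_M) := [seq V (Z t k i w) | i <- iota 0 (n k t)].
Let N t : R := \sum_(k < M) (n k t)%:R.
Let samples t := [seq (k, i) | k <- enum 'I_M, i <- iota 0 (n k t)].
Let below t v (ki : 'I_M * nat) := Z t ki.1 ki.2 @^-1` (V @^-1` `]-oo, v]).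
Let qhat t w := agg_threshold alpha (scores t w).
Let qmix t w := mix_quantile alpha (scores t w).
Let covered t := [set w | V (Ztest t w) <= qhat t w].
Let test_below t c := [set w | V (Ztest t w) <= c].
Let gap t e := [set w | e <= `|qhat t w - qmix t w|].
Let deviation t v g := [set w | g <= `|mix_ecdf (scores t w) v - G v|].

Let size_scores t w k : size (scores t w k) = n k t.
Proof. by rewrite size_map size_iota. Qed.

Let Ntot_scores t w : Ntot (scores t w) = N t.
Proof. by apply: eq_bigr => k _; rewrite size_scores. Qed.

Let N_gt0 t : (forall k, (0 < n k t)%N) -> 0 < N t.
Proof. by move=> n_gt0; rewrite /N (bigD1 (Ordinal M_gt0)) //= ltr_pwDl ?sumr_ge0 ?ltr0n. Qed.

Let measurable_sublevel v : measurable (V @^-1` `]-oo, v]).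
Proof. by rewrite -[X in measurable X]setTI; apply: mV. Qed.

Let measurable_below t v ki : measurable (below t v ki).
Proof. by rewrite -[X in measurable X]setTI; apply: mZ. Qed.

Let mem_samples t ki : ki \in samples t -> (ki.2 < n ki.1 t)%N.
Proof. by move=> /allpairsPdep[k [i [_ + ->]]]; rewrite mem_iota. Qed.

Let uniq_samples t : uniq (samples t).
Proof.
apply: allpairs_uniq_dep => [|k _|]; [exact: enum_uniq | exact: iota_uniq |].
by move=> [k1 i1] [k2 i2] _ _ /= [-> ->].
Qed.

Let size_samples t : (size (samples t))%:R = N t.
Proof.
rewrite size_allpairs_dep /N -natr_sum sumnE big_map big_enum /=.
by congr _%:R; apply: eq_bigr => k _; rewrite size_iota.
Qed.

Let mix_ecdf_scoresE t w v : (forall k, (0 < n k t)%N) ->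
  mix_ecdf (scores t w) v = (\sum_(ki <- samples t) \1_(below t v ki) w) / N t.
Proof.
move=> n_gt0; rewrite mix_ecdfE => [|k]; last by rewrite size_scores.
rewrite Ntot_scores big_allpairs_dep big_enum /=; congr (_ / _); apply: eq_bigr => k _.
rewrite count_map -sum1_count natr_sum [LHS]big_mkcond; apply: eq_bigr => i _.
rewrite indicE; have -> : (w \in below t v (k, i)) = (V (Z t k i w) <= v).
  by apply/idP/idP => [/set_mem|Zv]; [|apply/mem_set]; rewrite /below /= in_itv.
by case: ifP => /= ->.
Qed.

Let qmix_leE t w v : (forall k, (0 < n k t)%N) ->
  (qmix t w <= v) = (1 - alpha <= mix_ecdf (scores t w) v).
Proof.
have alpha' : 0 < 1 - alpha <= 1 by case/andP: alpha01 => ? ?; apply/andP; split; lra.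
by move=> n_gt0; rewrite /qmix mix_quantile_leE // => k; rewrite size_scores.
Qed.

Let measurable_test t : measurable_fun setT (fun w => V (Ztest t w)).
Proof. exact: measurableT_comp mV (mZtest t). Qed.

Let measurable_mix_ecdf t v : (forall k, (0 < n k t)%N) ->
  measurable_fun setT (fun w => mix_ecdf (scores t w) v).
Proof.
move=> n_gt0; apply: (@eq_measurable_fun _ _ _ _ setT
  (fun w => (\sum_(ki <- samples t) \1_(below t v ki) w) / N t)).
  by move=> w _; rewrite mix_ecdf_scoresE.
apply: measurable_realfun.measurable_funM; last exact: measurable_cst.
by apply: measurable_sum => ki; exact: measurable_realfun.measurable_indic.
Qed.

Let measurable_qhat t : measurable_fun setT (qhat t).
Proof.
apply: (@eq_measurable_fun _ _ _ _ setT (fun w => \sum_(k < M) ((n k t)%:R / N t) *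
  order_stat (scores t w k) (qidx alpha (n k t)))).
  move=> w _; rewrite /qhat /agg_threshold Ntot_scores.
  by apply: eq_bigr => k _; rewrite /qlocal size_scores.
apply: measurable_sum => k; apply: measurable_realfun.measurable_funM.
  exact: measurable_cst.
by apply: measurable_order_stat => i; exact: measurableT_comp mV (mZ t k i).
Qed.

Let measurable_qmix t : (forall k, (0 < n k t)%N) -> measurable_fun setT (qmix t).
Proof.
move=> n_gt0; apply: measurable_fun_sublevel => v.
rewrite (_ : [set w | _] = [set w | 1 - alpha <= mix_ecdf (scores t w) v]).
  by apply: measurable_set_le; [exact: measurable_cst | exact: measurable_mix_ecdf].
by apply/seteqP; split => w /=; rewrite qmix_leE.
Qed.

Let measurable_covered t : measurable (covered t).
Proof. exact: measurable_set_le (measurable_test t) (measurable_qhat t). Qed.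

Let measurable_test_below t c : measurable (test_below t c).
Proof. exact: measurable_set_le (measurable_test t) (measurable_cst c). Qed.

Let measurable_gap t e : (forall k, (0 < n k t)%N) -> measurable (gap t e).
Proof.
by move=> n_gt0; apply: measurable_dist_ge; [exact: measurable_qhat | exact: measurable_qmix].
Qed.

Let measurable_deviation t v g : (forall k, (0 < n k t)%N) -> measurable (deviation t v g).
Proof.
by move=> n_gt0; apply: measurable_dist_ge; [exact: measurable_mix_ecdf|exact: measurable_cst].
Qed.

Let prob_test_below t c : fine (P t (test_below t c)) = G c.
Proof. by rewrite /G -(lawZtest t). Qed.

Let below_indep t v : {in samples t &, forall i j, i != j ->
  P t (below t v i `&` below t v j) = (P t (below t v i) * P t (below t v j))%E}.
Proof.
move=> i j iJ jJ ij; apply: (mutually_independent_pair (indep t) (i := Some i) (j := Some j)).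
- exact: mem_samples.
- exact: mem_samples.
- by apply: contra ij => /eqP[->].
- exact: measurable_sublevel.
- exact: measurable_sublevel.
Qed.

Let below_prob_near t v e ki : (dTV (Pcal ki.1 t) Ptest < e%:E)%E ->
  ki \in samples t -> `|fine (P t (below t v ki)) - G v| < e.
Proof.
move=> tv kiJ; rewrite /below lawZ ?mem_samples //.
exact: dTV_abs_lt tv (measurable_sublevel v).
Qed.

(* Chebyshev for the N t pairwise independent indicators of [below t v], whose means are
   within g / 2 of G v by the TV bound. *)
Lemma mix_ecdf_deviation_le t v g : 0 < g -> (forall k, (0 < n k t)%N) ->
  (forall k, (dTV (Pcal k t) Ptest < (g / 2)%:E)%E) ->
  fine (P t (deviation t v g)) <= 4 / (N t * g ^+ 2).
Proof.
move=> g_gt0 n_gt0 tv; have Nt_gt0 := N_gt0 t n_gt0.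
pose S w := \sum_(ki <- samples t) (\1_(below t v ki) w : R).
set Sp := \sum_(ki <- samples t) fine (P t (below t v ki)).
have sum_const (c : R) : \sum_(ki <- samples t) c = N t * c.
  rewrite -size_samples -sum1_size natr_sum mulr_suml.
  by apply: eq_bigr => _ _; rewrite mul1r.
have Sp_near : `|Sp - N t * G v| <= N t * (g / 2).
  rewrite -!sum_const -sumrB; apply: le_trans (ler_norm_sum _ _ _) _.
  rewrite !big_seq; apply: ler_sum => ki kiJ.
  exact/ltW/below_prob_near.
have eps_gt0 : 0 < N t * (g / 2) by rewrite mulr_gt0 ?divr_gt0.
have := chebyshev_indic_sum eps_gt0 (uniq_samples t) (measurable_below t v) (below_indep t v).
rewrite size_samples (_ : N t / _ = 4 / (N t * g ^+ 2)); last by field; rewrite !gt_eqF.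
apply: le_trans; apply: le_fine_measure.
- exact: measurable_deviation.
- apply: measurable_dist_ge; last exact: measurable_cst.
  by apply: measurable_sum => ki; exact: measurable_realfun.measurable_indic.
move=> w; rewrite /deviation /= mix_ecdf_scoresE // -/(S w) -/Sp => dev.
have : N t * g <= `|S w - N t * G v|.
  have -> : S w - N t * G v = N t * (S w / N t - G v) by field; rewrite gt_eqF.
  by rewrite normrM gtr0_norm // ler_pM2l.
have := ler_distD Sp (S w) (N t * G v); lra.
Qed.

Lemma mix_ecdf_deviation_cvg v g del : 0 < g -> 0 < del ->
  \forall t \near \oo, fine (P t (deviation t v g)) < del.
Proof.
move=> g_gt0 del_gt0; pose K := (Num.trunc (4 / (g ^+ 2 * del))).+1.
have n_gt0 : \forall t \near \oo, forall k, (0 < n k t)%N.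
  by apply: filter_forall => k; exact: n_cvg.
near=> t; apply: le_lt_trans (mix_ecdf_deviation_le t v g g_gt0 _ _) _.
- by near: t.
- by near: t; apply: dTV_cvg; rewrite divr_gt0.
have K_le : K%:R <= N t.
  apply: le_trans (_ : (n (Ordinal M_gt0) t)%:R <= _).
    by rewrite ler_nat; near: t; exact: n_cvg.
  by rewrite /N (bigD1 (Ordinal M_gt0)) //= lerDl sumr_ge0.
have K_gt : 4 / (g ^+ 2 * del) < K%:R by exact: truncnS_gt.
have gd_gt0 : 0 < g ^+ 2 * del by rewrite mulr_gt0 ?exprn_gt0.
rewrite ltr_pdivrMr ?mulr_gt0 ?exprn_gt0 ?(lt_le_trans _ K_le) ?ltr0n //.
move: K_gt; rewrite ltr_pdivrMr // => K_gt; apply: lt_le_trans K_gt _.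
by rewrite (_ : del * (N t * g ^+ 2) = N t * (g ^+ 2 * del)) ?ler_pM2r //; ring.
Unshelve. all: by end_near.
Qed.

Lemma coverage_le t b e : (forall k, (0 < n k t)%N) ->
  fine (P t (covered t)) <=
  G (b + e) + fine (P t (deviation t b (G b - (1 - alpha)))) + fine (P t (gap t e)).
Proof.
move=> n_gt0; rewrite -(prob_test_below t).
apply: le_fine_measureU3; [exact: measurable_covered | exact: measurable_test_below |
  exact: measurable_deviation | exact: measurable_gap | move=> w /= cov].
have [|/ltr_normlP[gap1 gap2]] := leP e `|qhat t w - qmix t w|; first by right.
have [|/ltr_normlP[dev1 dev2]] := leP (G b - (1 - alpha)) `|mix_ecdf (scores t w) b - G b|.
  by left; right.
have : qmix t w <= b by rewrite qmix_leE //; lra.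
by left; left; move: cov; rewrite /test_below /covered /=; lra.
Qed.

Lemma coverage_ge t a e : (forall k, (0 < n k t)%N) ->
  G (a - e) <= fine (P t (covered t)) +
  fine (P t (deviation t a (1 - alpha - G a))) + fine (P t (gap t e)).
Proof.
move=> n_gt0; rewrite -(prob_test_below t).
apply: le_fine_measureU3; [exact: measurable_test_below | exact: measurable_covered |
  exact: measurable_deviation | exact: measurable_gap | move=> w /= below_ae].
have [|/ltr_normlP[gap1 gap2]] := leP e `|qhat t w - qmix t w|; first by right.
have [|/ltr_normlP[dev1 dev2]] := leP (1 - alpha - G a) `|mix_ecdf (scores t w) a - G a|.
  by left; right.
have : a < qmix t w by rewrite ltNge qmix_leE // -ltNge; lra.
by left; left; move: below_ae; rewrite /test_below /covered /=; lra.
Qed.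

Lemma coverage_cvg : (forall e, 0 < e -> (fun t => fine (P t (gap t e))) @ \oo --> 0) ->
  (fun t => `| fine (P t [set w | (Ztest t w).2 \in Cset V (qhat t w) (Ztest t w).1])
               - (1 - alpha) |) @ \oo --> 0.
Proof.
move=> gap_cvg; apply/cvgrPdist_le => eps eps_gt0.
have eps3_gt0 : 0 < eps / 3 by rewrite divr_gt0.
have alpha' : 0 < 1 - alpha < 1 by case/andP: alpha01 => ? ?; apply/andP; split; lra.
have [a [b [e [e_gt0 Ga Gb Gae Gbe]]]] : exists a b e, [/\ 0 < e, G a < 1 - alpha,
    1 - alpha < G b, 1 - alpha - eps / 3 < G (a - e) & G (b + e) < 1 - alpha + eps / 3].
  exact (continuous_cdf_bracket mV G_continuous alpha' eps3_gt0).
have n_gt0 : \forall t \near \oo, forall k, (0 < n k t)%N.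
  by apply: filter_forall => k; exact: n_cvg.
near=> t.
have -> : [set w | (Ztest t w).2 \in Cset V (qhat t w) (Ztest t w).1] = covered t.
  by apply/seteqP; split => w; rewrite /covered /Cset /=; case: (Ztest t w) => x y /=;
    [move/set_mem | move/mem_set].
have hn : forall k, (0 < n k t)%N by near: t.
have gap_small : fine (P t (gap t e)) < eps / 3.
  near: t; move/cvgrPdist_lt: (gap_cvg e e_gt0) => /(_ _ eps3_gt0).
  by apply: filterS => t; rewrite sub0r normrN => /(le_lt_trans (ler_norm _)).
have dev_a : fine (P t (deviation t a (1 - alpha - G a))) < eps / 3.
  by near: t; apply: mix_ecdf_deviation_cvg; rewrite // subr_gt0.
have dev_b : fine (P t (deviation t b (G b - (1 - alpha)))) < eps / 3.
  by near: t; apply: mix_ecdf_deviation_cvg; rewrite // subr_gt0.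
have := coverage_le t b e hn; have := coverage_ge t a e hn.
rewrite sub0r normrN normr_id ler_norml => ? ?; apply/andP; split; lra.
Unshelve. all: by end_near.
Qed.

End CoverageConsistency.

Theorem theorem2
  (R : realType) (alpha : R) (M : nat)
  (dX dY : measure_display) (X : measurableType dX) (Y : measurableType dY)
  (V : X * Y -> R) (Ptest : probability (X * Y)%type R)
  (dO : measure_display) (Omega : nat -> measurableType dO)
  (P : forall t, probability (Omega t) R)
  (n : 'I_M -> nat -> nat)
  (Pcal : 'I_M -> nat -> probability (X * Y)%type R)
  (Z : forall t, 'I_M -> nat -> Omega t -> (X * Y)%type)
  (Ztest : forall t, Omega t -> (X * Y)%type) :
  0 < alpha < 1 ->
  (0 < M)%N ->
  measurable_fun setT V ->
  continuous (fun v : R => fine (Ptest (V @^-1` `]-oo, v]))) ->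
  (forall t k i, measurable_fun setT (Z t k i)) ->
  (forall t, measurable_fun setT (Ztest t)) ->
  (forall t k i, (i < n k t)%N -> forall A, measurable A ->
     P t (Z t k i @^-1` A) = Pcal k t A) ->
  (forall t A, measurable A -> P t (Ztest t @^-1` A) = Ptest A) ->
  (forall t, mutually_independent (P t)
     (fun j : option ('I_M * nat) =>
        match j with Some ki => Z t ki.1 ki.2 | None => Ztest t end)
     [set j | match j with Some ki => (ki.2 < n ki.1 t)%N | None => True end]) ->
  (forall k (B : nat), \forall t \near \oo, (B <= n k t)%N) ->
  (forall e : R, 0 < e -> \forall t \near \oo,
     forall k, (dTV (Pcal k t) Ptest < e%:E)%E) ->
  (let scores t (w : Omega t) (k : 'I_M) :=
       [seq V (Z t k i w) | i <- iota 0 (n k t)] in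
   (forall e : R, 0 < e ->
     (fun t => fine (P t [set w | e <= `|agg_threshold alpha (scores t w)
                                     - mix_quantile alpha (scores t w)|]))
       @ \oo --> 0) ->
   (fun t => `| fine (P t [set w | (Ztest t w).2 \in
                 Cset V (agg_threshold alpha (scores t w)) (Ztest t w).1])
               - (1 - alpha) |) @ \oo --> 0).
Proof.
move=> alpha01 M_gt0 mV G_continuous mZ mZtest lawZ lawZtest indep n_cvg dTV_cvg scores.
exact (coverage_cvg alpha01 M_gt0 mV G_continuous mZ mZtest lawZ lawZtest indep n_cvg dTV_cvg).
Qed.
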